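(* Let $0<t\leq 1$. For all $P,Q\in\mathbf{R}^3$ with $d_E(P,Q)<2t$, one has $\rho_t(P,Q)=d_E(P,Q)$.
   Context: $d_E$ denotes the Euclidean metric on $\mathbf{R}^3$. Fix $0<t\leq 1$ and let $\alpha=\sin^{-1}\!\left(\frac{\sqrt{2-t^2}-t}{2}\right)$. For $X,Y\in\mathbf{R}^3$ with $d_E(X,Y)\leq 2$, choose a sphere of radius $1$ with center $C$ containing $X$ and $Y$, let $X'=2C-X$, and define $$d_t(X,Y)=\begin{cases} d_E(X,Y) & \text{if } \angle XCY\leq \pi-2\alpha,\\ 2t+d_E(X',Y) & \text{if } \angle XCY>\pi-2\alpha,\end{cases}$$ which depends only on $s=d_E(X,Y)$ (since $\angle XCY=2\sin^{-1}(s/2)$ and $d_E(X',Y)=\sqrt{4-s^2}$). For $P,Q\in\mathbf{R}^3$ let $\Gamma_{P,Q}$ be the set of finite sequences $(X_0,\dots,X_n)$, $n\in\mathbf{N}$, in $\mathbf{R}^3$ with $X_0=P$, $X_n=Q$, $d_E(X_{i-1},X_i)\leq 2$ for $1\leq i\leq n$, and $$\rho_t(P,Q)=\inf_{(X_0,\dots,X_n)\in\Gamma_{P,Q}}\sum_{i=1}^n d_t(X_{i-1},X_i).$$ *)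

From Stdlib Require Import Reals List.
From Coquelicot Require Import Coquelicot.
Open Scope R_scope.

Definition point : Type := (R * R * R)%type.

Definition dE (X Y : point) : R :=
  let '(x1, x2, x3) := X in let '(y1, y2, y3) := Y in
  sqrt ((x1 - y1) ^ 2 + (x2 - y2) ^ 2 + (x3 - y3) ^ 2).

Definition alpha (t : R) : R := asin ((sqrt (2 - t ^ 2) - t) / 2).

(* d_t as a function of s = d_E(X,Y) (for s <= 2):
   angle XCY = 2 arcsin(s/2), d_E(X',Y) = sqrt(4 - s^2). *)
Definition dt_s (t s : R) : R :=
  if Rle_dec (2 * asin (s / 2)) (PI - 2 * alpha t) then s
  else 2 * t + sqrt (4 - s ^ 2).

Definition dt (t : R) (X Y : point) : R := dt_s t (dE X Y).

(* A chain (X_0,...,X_n) with X_0 = P is represented as P :: l, n = length l. *)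
Fixpoint chain_ok (X : point) (l : list point) : Prop :=
  match l with
  | nil => True
  | Y :: l' => dE X Y <= 2 /\ chain_ok Y l'
  end.

Fixpoint chain_cost (t : R) (X : point) (l : list point) : R :=
  match l with
  | nil => 0
  | Y :: l' => dt t X Y + chain_cost t Y l'
  end.

Definition in_Gamma (P Q : point) (l : list point) : Prop :=
  chain_ok P l /\ last l P = Q.

Definition rho (t : R) (P Q : point) : Rbar :=
  Glb_Rbar (fun c => exists l, in_Gamma P Q l /\ c = chain_cost t P l).

(** For [s < 2t] the inequality [t <= 1] forces [2 asin (s/2) <= PI - 2 alpha t],
    so a single step of length [s] costs exactly [s]; hence [rho t P Q <= dE P Q].
    Conversely every step costs either its Euclidean length or at least [2t], so by
    the triangle inequality a chain from [P] to [Q] costs at least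
    [min (2t) (dE P Q)], which is [dE P Q] here. *)
From Stdlib Require Import Reals List Lra Psatz.
From Coquelicot Require Import Coquelicot.
Open Scope R_scope.

Lemma dE_ge0 (X Y : point) : 0 <= dE X Y.
Proof. now destruct X as [[x1 x2] x3], Y as [[y1 y2] y3]; apply sqrt_pos. Qed.

Lemma dE_refl (X : point) : dE X X = 0.
Proof.
  destruct X as [[x1 x2] x3]; unfold dE.
  replace ((x1 - x1) ^ 2 + (x2 - x2) ^ 2 + (x3 - x3) ^ 2) with 0 by ring.
  exact sqrt_0.
Qed.

Lemma sqrt_sum_sq3_triangle (a b c d e f : R) :
  sqrt ((a + d) ^ 2 + (b + e) ^ 2 + (c + f) ^ 2) <=
  sqrt (a ^ 2 + b ^ 2 + c ^ 2) + sqrt (d ^ 2 + e ^ 2 + f ^ 2).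
Proof.
  set (u := a ^ 2 + b ^ 2 + c ^ 2); set (v := d ^ 2 + e ^ 2 + f ^ 2).
  assert (Hu : 0 <= u) by (unfold u; nra).
  assert (Hv : 0 <= v) by (unfold v; nra).
  assert (Cauchy_Schwarz : Rabs (a * d + b * e + c * f) <= sqrt u * sqrt v).
  { rewrite <- sqrt_mult, <- sqrt_Rsqr_abs by assumption.
    apply sqrt_le_1_alt; unfold Rsqr, u, v.
    pose proof (pow2_ge_0 (a * e - b * d)); pose proof (pow2_ge_0 (a * f - c * d));
      pose proof (pow2_ge_0 (b * f - c * e)).
    nra. }
  rewrite <- (sqrt_Rsqr (sqrt u + sqrt v))
    by (pose proof (sqrt_pos u); pose proof (sqrt_pos v); lra).
  apply sqrt_le_1_alt; unfold Rsqr.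
  pose proof (sqrt_sqrt u Hu); pose proof (sqrt_sqrt v Hv);
    pose proof (Rle_abs (a * d + b * e + c * f)).
  unfold u, v in *; nra.
Qed.

Lemma dE_triangle (X Y Z : point) : dE X Z <= dE X Y + dE Y Z.
Proof.
  destruct X as [[x1 x2] x3], Y as [[y1 y2] y3], Z as [[z1 z2] z3]; unfold dE.
  replace (x1 - z1) with ((x1 - y1) + (y1 - z1)) by ring.
  replace (x2 - z2) with ((x2 - y2) + (y2 - z2)) by ring.
  replace (x3 - z3) with ((x3 - y3) + (y3 - z3)) by ring.
  apply sqrt_sum_sq3_triangle.
Qed.

Lemma asin_add_le_PI2 (x y : R) :
  -1 <= x <= 1 -> 0 <= y <= 1 -> y <= sqrt (1 - x²) -> asin x + asin y <= PI / 2.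
Proof.
  intros Hx Hy Hyx.
  destruct (Rle_or_lt (asin x + asin y) (PI / 2)) as [|Hgt]; [assumption | exfalso].
  pose proof (asin_bound x); pose proof (asin_bound y); pose proof PI_RGT_0.
  assert (Hy0 : 0 <= asin y).
  { destruct (Rle_or_lt 0 (asin y)) as [| Hneg]; [assumption |].
    pose proof (sin_lt_0_var (asin y) ltac:(lra) Hneg); rewrite sin_asin in * by lra; lra. }
  assert (Hcos : cos (asin x) < cos (PI / 2 - asin y)) by (apply cos_decreasing_1; lra).
  rewrite cos_shift, sin_asin, cos_asin in Hcos by lra.
  lra.
Qed.

Lemma alpha_sin_le (t : R) :
  0 <= t <= 1 -> (sqrt (2 - t ^ 2) - t) / 2 <= sqrt (1 - t ^ 2).
Proof.
  intros Ht.
  set (w := sqrt (2 - t ^ 2)).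
  assert (Hw : w * w = 2 - t ^ 2) by (apply sqrt_sqrt; nra).
  assert (Hw0 : 0 <= w) by apply sqrt_pos.
  assert (Htw : 2 * t ^ 2 - 1 <= t * w).
  { destruct (Rle_or_lt (2 * t ^ 2 - 1) 0); [nra |].
    apply Rsqr_incr_0_var; [unfold Rsqr | nra].
    replace (t * w * (t * w)) with (t ^ 2 * (w * w)) by ring.
    rewrite Hw.
    assert (0 <= 1 - t ^ 2) by nra; assert (0 <= 5 * t ^ 2 - 1) by nra; nra. }
  destruct (Rle_or_lt (w - t) 0); [pose proof (sqrt_pos (1 - t ^ 2)); lra |].
  rewrite <- (sqrt_Rsqr ((w - t) / 2)) by lra.
  apply sqrt_le_1_alt; unfold Rsqr; nra.
Qed.

Lemma dt_s_short (t s : R) : 0 < t -> t <= 1 -> 0 <= s < 2 * t -> dt_s t s = s.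
Proof.
  intros Ht0 Ht1 Hs.
  unfold dt_s; destruct Rle_dec as [| Hnot]; [reflexivity | exfalso; apply Hnot].
  set (w := sqrt (2 - t ^ 2)).
  assert (Hw : w * w = 2 - t ^ 2) by (apply sqrt_sqrt; nra).
  assert (Hw0 : 0 <= w) by apply sqrt_pos.
  assert (Hsin_alpha : (w - t) / 2 <= sqrt (1 - (s / 2)²)).
  { apply (Rle_trans _ (sqrt (1 - t ^ 2))); [apply alpha_sin_le; lra |].
    apply sqrt_le_1_alt; unfold Rsqr.
    assert (s / 2 * (s / 2) <= t * t) by (apply Rmult_le_compat; lra).
    lra. }
  assert (Htw : t <= w) by nra.
  assert (Hw2 : w <= 2) by nra.
  enough (asin (s / 2) + alpha t <= PI / 2) by lra.
  unfold alpha; fold w.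
  apply asin_add_le_PI2; [lra | lra | assumption].
Qed.

Lemma dt_s_eq_or_ge (t s : R) : 0 < t -> dt_s t s = s \/ 2 * t <= dt_s t s.
Proof.
  intros Ht; unfold dt_s; destruct Rle_dec; [now left | right].
  pose proof (sqrt_pos (4 - s ^ 2)); lra.
Qed.

Lemma last_cons (l : list point) (X Y : point) : last (Y :: l) X = last l Y.
Proof.
  revert X Y; induction l as [| Z l IHl]; intros X Y; [reflexivity |].
  change (last (Z :: l) X = last (Z :: l) Y); now rewrite !IHl.
Qed.

Lemma chain_cost_ge_min (t : R) (l : list point) (X : point) : 0 < t ->
  chain_ok X l -> Rmin (2 * t) (dE X (last l X)) <= chain_cost t X l.
Proof.
  intros Ht; revert X; induction l as [| Y l IHl]; intros X Hchain.
  - simpl; rewrite dE_refl; apply Rmin_r.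
  - destruct Hchain as [_ Hchain]; specialize (IHl Y Hchain).
    rewrite last_cons; simpl chain_cost; unfold dt.
    pose proof (dE_ge0 X Y); pose proof (dE_triangle X Y (last l Y)).
    destruct (dt_s_eq_or_ge t (dE X Y) Ht) as [-> | Hlong].
    + revert IHl; do 2 apply Rmin_case_strong; intros; lra.
    + pose proof (Rmin_l (2 * t) (dE X (last l Y))).
      assert (0 <= Rmin (2 * t) (dE Y (last l Y))) by (apply Rmin_glb; [lra | apply dE_ge0]).
      lra.
Qed.

Theorem corollary3 (t : R) (ht0 : 0 < t) (ht1 : t <= 1) (P Q : point) :
  dE P Q < 2 * t -> rho t P Q = Finite (dE P Q).
Proof.
  intros HPQ; apply is_glb_Rbar_unique; split.
  - intros c [l [[Hchain Hlast] ->]]; simpl.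
    pose proof (chain_cost_ge_min t l P ht0 Hchain) as Hcost.
    rewrite Hlast, Rmin_right in Hcost by lra; exact Hcost.
  - intros b Hb; apply Hb; exists (Q :: nil); split.
    + split; [split; [lra | exact I] | reflexivity].
    + simpl; unfold dt; rewrite dt_s_short by (pose proof (dE_ge0 P Q); lra); ring.
Qed.
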